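(* In the compulsory constrained two-facility location game described in the context, every deterministic strategyproof mechanism has approximation ratio at least $3$ under the sum cost objective.
   Context: An instance consists of $n$ agents with private locations $x_1,\dots,x_n\in\mathbb{R}$, each served by both facilities $F_1,F_2$, and a finite multiset $A=\{a_1\le\dots\le a_m\}$ of real alternative locations. A deterministic mechanism $f$ maps each instance (reported locations and $A$) to $(y_1,y_2)$ with $y_1\in A$, $y_2\in A\setminus\{y_1\}$ (one copy removed from the multiset). Agent $j$'s cost is $c_j(\mathbf{y},x_j)=\max\{|y_1-x_j|,|y_2-x_j|\}$; the sum cost is $sc(\mathbf{y},\mathbf{x})=\sum_j c_j(\mathbf{y},x_j)$. $f$ is strategyproof if no agent can strictly decrease her true cost by misreporting her own location, whatever the others report. The approximation ratio of $f$ is $\sup_{\text{instances}} sc(f(\mathbf{x}),\mathbf{x})/sc(OPT,\mathbf{x})$, where $OPT$ minimizes the sum cost over feasible outcomes. *)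

From HB Require Import structures.
From mathcomp Require Import all_boot all_order all_algebra.
From mathcomp Require Import reals.
Set Implicit Arguments. Unset Strict Implicit. Unset Printing Implicit Defensive.
Import Order.TTheory GRing.Theory Num.Theory.
Local Open Scope ring_scope.

Section TwoFacility.
Variable R : realType.

Definition outcome := (R * R)%type.

(* Feasibility w.r.t. the multiset A (a seq): y1 in A, y2 in A minus one copy of y1. *)
Definition feasible (A : seq R) (y : outcome) : bool :=
  (y.1 \in A) && (y.2 \in rem y.1 A).

Definition cost (y : outcome) (xj : R) : R := Num.max `|y.1 - xj| `|y.2 - xj|.

Definition sc (n : nat) (y : outcome) (x : 'I_n -> R) : R :=
  \sum_(j < n) cost y (x j).

Definition mechanism := forall n : nat, ('I_n -> R) -> seq R -> outcome.

Definition feasible_mech (f : mechanism) : Prop :=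
  forall n (x : 'I_n -> R) (A : seq R), (1 < size A)%N -> feasible A (f n x A).

Definition update n (x : 'I_n -> R) (j : 'I_n) (xj' : R) : 'I_n -> R :=
  fun i => if i == j then xj' else x i.

Definition strategyproof (f : mechanism) : Prop :=
  forall n (x : 'I_n -> R) (A : seq R) (j : 'I_n) (xj' : R),
    (1 < size A)%N ->
    cost (f n x A) (x j) <= cost (f n (update x j xj') A) (x j).

Definition is_opt n (x : 'I_n -> R) (A : seq R) (y : outcome) : Prop :=
  feasible A y /\ forall y', feasible A y' -> sc y x <= sc y' x.

(* The approximation ratio sup_I sc(f(I))/sc(OPT(I)) is at least rho:
   for every r < rho some instance has sc(f) > r * sc(OPT)
   (covering the infinite-ratio case sc(OPT) = 0 < sc(f)). *)
Definition approx_ratio_ge (f : mechanism) (rho : R) : Prop :=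
  forall r : R, r < rho ->
    exists n (x : 'I_n -> R) (A : seq R) (yopt : outcome),
      (1 < size A)%N /\ is_opt x A yopt /\ r * sc yopt x < sc (f n x A) x.

End TwoFacility.

(** Two agents at [1 - e] and [1 + e], alternatives [{0, 0, 2, 2}].  If the
    mechanism puts a facility at [0], the agent at [1 + e] reports [2]; if it
    outputs [(2, 2)], the agent at [1 - e] reports [0].  Strategyproofness
    forbids the deviator's favourite outcome (both facilities at her report
    [q]), so after the deviation some facility sits at the far pole [p]; the
    sum cost is then [3 - e], while [(q, q)] costs only [1 + e], and
    [(3 - e) / (1 + e)] tends to [3]. *)

From mathcomp Require Import all_boot all_order all_algebra.
From mathcomp Require Import reals.
From mathcomp Require Import lra.
Set Implicit Arguments. Unset Strict Implicit. Unset Printing Implicit Defensive.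
Import Order.TTheory GRing.Theory Num.Theory.
Local Open Scope ring_scope.

Section LowerBound.
Variable R : realType.
Implicit Types (f : mechanism R) (y : outcome R) (A : seq R) (a p q s t z : R).

Lemma cost_dup a z : cost (a, a) z = `|a - z|.
Proof. by rewrite /cost maxxx. Qed.

Lemma cost_ge_dist y a z : a \in [:: y.1; y.2] -> `|a - z| <= cost y z.
Proof. by rewrite !inE /cost le_max => /orP[] /eqP ->; rewrite lexx ?orbT. Qed.

Lemma cost_add_ge_dist y s t : `|s - t| <= cost y s + cost y t.
Proof.
apply: le_trans (ler_distD y.1 s t) _; rewrite distrC.
by apply: lerD; apply: cost_ge_dist; rewrite mem_head.
Qed.

Lemma sc_ord2 y (x : 'I_2 -> R) j k :
  j != k -> sc y x = cost y (x j) + cost y (x k).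
Proof.
have ord2 (i : 'I_2) : i = ord0 \/ i = ord_max.
  by case: i => -[|[|//]] ?; [left | right]; apply/val_inj.
have -> : sc y x = cost y (x ord0) + cost y (x ord_max).
  by rewrite /sc big_ord_recr big_ord1; congr (cost _ (x _) + _); apply/val_inj.
by case: (ord2 j) (ord2 k) => -> [] ->; rewrite ?eqxx // addrC.
Qed.

Lemma feasible_dup A a : (1 < count_mem a A)%N -> feasible A (a, a).
Proof.
move=> cnt; apply/andP; split; rewrite -has_pred1 has_count.
- exact: ltnW.
- by rewrite count_mem_rem eqxx subn_gt0.
Qed.

Lemma feasible_pole A p q y :
  {subset A <= [:: p; q]} -> feasible A y -> y != (q, q) -> p \in [:: y.1; y.2].
Proof.
move=> sub /andP[/sub y1A /mem_rem/sub y2A]; move: y1A y2A.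
case: y => y1 y2 /=; rewrite !inE.
by case/orP=> /eqP-> /orP[] /eqP->; rewrite ?eqxx ?orbT.
Qed.

Lemma strategyproof_no_dup f n (x : 'I_n -> R) A j q :
  strategyproof f -> (1 < size A)%N ->
  `|q - x j| < cost (f n x A) (x j) -> f n (update x j q) A != (q, q).
Proof.
move=> sp sizeA lt_cost; apply/eqP => dup.
by move: (sp n x A j q sizeA); rewrite dup cost_dup leNgt lt_cost.
Qed.

Lemma deviation_lower_bound f A (x : 'I_2 -> R) j k p q r :
  feasible_mech f -> strategyproof f -> (1 < size A)%N -> j != k ->
  {subset A <= [:: p; q]} -> (1 < count_mem q A)%N ->
  `|q - x j| < cost (f 2 x A) (x j) ->
  r * `|q - x k| < `|p - q| + `|p - x k| ->
  exists n (x : 'I_n -> R) A yopt,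
    (1 < size A)%N /\ is_opt x A yopt /\ r * sc yopt x < sc (f n x A) x.
Proof.
move=> feas sp sizeA jk sub cnt lt_cost ratio.
pose x' := update x j q.
have x'j : x' j = q by rewrite /x' /update eqxx.
have x'k : x' k = x k by rewrite /x' /update eq_sym (negbTE jk).
have sc_dup : sc (q, q) x' = `|q - x k|.
  by rewrite (sc_ord2 _ _ jk) x'j x'k !cost_dup subrr normr0 add0r.
exists 2%N, x', A, (q, q); split=> //; split.
  split; first exact: feasible_dup.
  by move=> y _; rewrite sc_dup (sc_ord2 _ _ jk) x'j x'k cost_add_ge_dist.
have pole :=
  feasible_pole sub (feas 2 x' A sizeA) (strategyproof_no_dup sp sizeA lt_cost).
rewrite sc_dup (sc_ord2 _ _ jk) x'j x'k; apply: lt_le_trans ratio _.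
by apply: lerD; apply: cost_ge_dist.
Qed.

Lemma ratio_slack (r : R) : r < 3 -> exists2 e, 0 < e < 1 & r * (1 + e) < 3 - e.
Proof.
move=> r_lt3; have [r_le1 | r_gt1] := lerP r 1.
  by exists (1 / 2); lra.
by exists ((3 - r) / 8); nra.
Qed.

End LowerBound.

Theorem theorem1 (R : realType) (f : mechanism R) :
  feasible_mech f -> strategyproof f -> approx_ratio_ge f 3.
Proof.
move=> feas sp r /ratio_slack[e /andP[e_gt0 e_lt1] r_e].
pose A : seq R := [:: 0; 0; 2; 2].
have sizeA : (1 < size A)%N by [].
have sub02 : {subset A <= [:: 0; 2]}.
  by move=> a; rewrite !inE => /or4P[] ->; rewrite ?orbT.
have sub20 : {subset A <= [:: 2; 0]} by move=> a /sub02; rewrite !inE orbC.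
have cnt0 : (1 < count_mem (0 : R)%R A)%N by rewrite /= eqxx.
have cnt2 : (1 < count_mem (2 : R)%R A)%N by rewrite /= eqxx !addnS.
pose x : 'I_2 -> R := fun i => if i == ord0 then 1 - e else 1 + e.
have [y22 | y_neq] := eqVneq (f 2 x A) (2, 2).
- apply: (deviation_lower_bound (A := A) (x := x) (j := ord0) (k := ord_max)
           (p := 2) (q := 0)) => //.
    by rewrite y22 cost_dup /x /= sub0r normrN !ger0_norm; lra.
  by rewrite /x /= sub0r normrN subr0 !ger0_norm; lra.
- apply: (deviation_lower_bound (A := A) (x := x) (j := ord_max) (k := ord0)
           (p := 0) (q := 2)) => //.
    have := cost_ge_dist (x ord_max) (feasible_pole sub02 (feas 2 x A sizeA) y_neq).
    by rewrite /x /= sub0r normrN !ger0_norm; lra.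
  by rewrite /x /= !sub0r !normrN !ger0_norm; lra.
Qed.
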